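(* Let $m,n\in\mathbb{N}$, $a\in\mathbb{R}$, $b\in(a,\infty)$, $f\in\mathscr A_{m,n}$. Then the function $$\mathbb{R}^m\times\mathbb{R}^{n-1}\ni(\theta,x_1,\dots,x_{n-1})\mapsto\int_a^bf(\theta,x_1,\dots,x_n)\,\mathrm dx_n\in\mathbb{R}$$ belongs to $\mathscr A_{m,n-1}$.
   Context: For $n\in\mathbb{N}_0$, $\mathcal P_n$ denotes the set of polynomials $\mathbb{R}^n\to\mathbb{R}$ (with $\mathbb{R}^0=\{0\}$). For $n\in\mathbb{N}$, $\mathcal R_n$ is the set of functions $R\colon\mathbb{R}^n\to\mathbb{R}$ for which there exist $P,Q\in\mathcal P_n$ with $R(x)=P(x)/Q(x)$ if $Q(x)\neq0$ and $R(x)=0$ if $Q(x)=0$. For $m\in\mathbb{N}$, $n\in\mathbb{N}_0$, $\mathscr A_{m,n}$ is the real linear span of all functions $g\colon\mathbb{R}^m\times\mathbb{R}^n\to\mathbb{R}$ of the form $g(\theta,x)=R(\theta)Q(x)\prod_{i=1}^r\mathbb 1_{A_i}\big(P_{i,0}(\theta)+\sum_{j=1}^nP_{i,j}(\theta)x_j\big)$ with $r\in\mathbb{N}$, $A_1,\dots,A_r\in\{\{0\},[0,\infty),(0,\infty)\}$, $R\in\mathcal R_m$, $Q\in\mathcal P_n$, $P_{i,j}\in\mathcal P_m$. *)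

From Stdlib Require Import Reals.
From Coquelicot Require Import Coquelicot.
From mathcomp Require Import ssreflect ssrfun ssrbool eqtype ssrnat seq fintype.
Set Implicit Arguments.
Unset Strict Implicit.
Local Open Scope R_scope.

Definition vec (n : nat) := 'I_n -> R.

Inductive is_poly (n : nat) : (vec n -> R) -> Prop :=
| poly_const (c : R) : is_poly (fun _ => c)
| poly_coord (i : 'I_n) : is_poly (fun x => x i)
| poly_add p q : is_poly p -> is_poly q -> is_poly (fun x => p x + q x)
| poly_mul p q : is_poly p -> is_poly q -> is_poly (fun x => p x * q x)
| poly_ext p q : is_poly p -> (forall x, p x = q x) -> is_poly q.

(* R_n : "rational functions", P/Q where Q <> 0 and 0 where Q = 0 *)
Definition is_rat (n : nat) (F : vec n -> R) : Prop :=
  exists P Q : vec n -> R, is_poly P /\ is_poly Q /\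
    forall x, F x = if Req_EM_T (Q x) 0 then 0 else P x / Q x.

Inductive ind_set := IZero | INonneg | IPos.

Definition ind (A : ind_set) (y : R) : R :=
  match A with
  | IZero => if Req_EM_T y 0 then 1 else 0
  | INonneg => if Rle_dec 0 y then 1 else 0
  | IPos => if Rlt_dec 0 y then 1 else 0
  end.

Definition affine_form (m n : nat) (P0 : vec m -> R) (P : 'I_n -> vec m -> R)
  (theta : vec m) (x : vec n) : R :=
  P0 theta + List.fold_right Rplus 0 (map (fun j => P j theta * x j) (enum 'I_n)).

Record factor (m n : nat) := Factor {
  f_set : ind_set;
  f_P0 : vec m -> R;
  f_P : 'I_n -> vec m -> R }.

Definition factor_ok (m n : nat) (c : factor m n) : Prop :=
  is_poly (f_P0 c) /\ forall j, is_poly (f_P c j).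

Definition eval_factor (m n : nat) (c : factor m n) (theta : vec m) (x : vec n) : R :=
  ind (f_set c) (affine_form (f_P0 c) (f_P c) theta x).

Definition is_generator (m n : nat) (g : vec m -> vec n -> R) : Prop :=
  exists (Rf : vec m -> R) (Q : vec n -> R) (cs : list (factor m n)),
    is_rat Rf /\ is_poly Q /\ cs <> nil /\ (forall c, List.In c cs -> factor_ok c) /\
    forall theta x, g theta x =
      Rf theta * Q x * List.fold_right Rmult 1 (map (fun c => eval_factor c theta x) cs).

Inductive in_A (m n : nat) : (vec m -> vec n -> R) -> Prop :=
| A_zero : in_A (fun _ _ => 0)
| A_gen g : is_generator g -> in_A g
| A_add f g : in_A f -> in_A g -> in_A (fun t x => f t x + g t x)
| A_scal (c : R) f : in_A f -> in_A (fun t x => c * f t x)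
| A_ext f g : in_A f -> (forall t x, f t x = g t x) -> in_A g.

(* (x_1,...,x_{n}) , t  |->  (x_1,...,x_n,t) in R^{n+1} *)
Definition snoc (n : nat) (x : vec n) (t : R) : vec n.+1 :=
  fun i => match unlift ord_max i with Some j => x j | None => t end.

From Pilot Require Import Defs.
From Stdlib Require Import Reals Lra.
From Coquelicot Require Import Coquelicot.
From mathcomp Require Import ssreflect ssrfun ssrbool eqtype ssrnat seq fintype.
Set Implicit Arguments.
Unset Strict Implicit.
Local Open Scope R_scope.

(* By linearity it suffices to integrate one generator
     R(theta) Q(x, s) prod_i 1_{S_i}(c_i(theta) s + d_i(theta, x)).
   Expanding Q in powers of s reduces this to integrating s^e times the
   factors.  Each factor is peeled off in turn: where c_i = 0 it is a
   constant; elsewhere, up to the single point s = -d_i/c_i, it is the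
   indicator of a half-line, i.e. a new lower or upper integration bound
   -d_i/c_i ("endpoint": affine in x over a polynomial in theta).  Once all
   factors are gone, the integral of s^e between the max L of the lower and
   the min U of the upper bounds is 1_{L<U} (U^{e+1} - L^{e+1})/(e+1), and
   comparisons between endpoints are again indicators of polynomial/affine
   expressions, so every coefficient produced stays in A_{m,n-1}. *)

Definition sumL {I : Type} (s : list I) (F : I -> R) : R :=
  List.fold_right Rplus 0 (map F s).
Definition prodl (l : list R) : R := List.fold_right Rmult 1 l.

Lemma sumL_ext {I : Type} (s : list I) F G :
  (forall j, F j = G j) -> sumL s F = sumL s G.
Proof. by move=> FG; rewrite /sumL; elim: s => [|j s /= ->]; rewrite ?FG. Qed.

Lemma sumL_add {I : Type} (s : list I) F G :
  sumL s (fun j => F j + G j) = sumL s F + sumL s G.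
Proof. rewrite /sumL; elim: s => [|j s /= ->] /=; lra. Qed.

Lemma sumL_scal {I : Type} (s : list I) c F :
  sumL s (fun j => c * F j) = c * sumL s F.
Proof. rewrite /sumL; elim: s => [|j s /= ->] /=; lra. Qed.

Lemma sumL_zero {I : Type} (s : list I) : sumL s (fun _ => 0) = 0.
Proof. rewrite /sumL; elim: s => [|j s /= ->] /=; lra. Qed.

Lemma sumL_app {I : Type} (s1 s2 : list I) F :
  sumL (s1 ++ s2) F = sumL s1 F + sumL s2 F.
Proof. rewrite /sumL; elim: s1 => [|j s /= ->] /=; lra. Qed.

Lemma sumL_map {I J : Type} (s : list I) (g : I -> J) F :
  sumL (map g s) F = sumL s (fun i => F (g i)).
Proof. by rewrite /sumL -map_comp. Qed.

Lemma prodl_app (l1 l2 : list R) :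
  List.fold_right Rmult 1 (l1 ++ l2) = prodl l1 * prodl l2.
Proof. rewrite /prodl; elim: l1 => [|y l /= ->] /=; lra. Qed.

(* [inv] is division with the convention 1/0 = 0 built into [is_rat]. *)
Definition inv (y : R) : R := if Req_EM_T y 0 then 0 else / y.

Lemma inv_nz y : y <> 0 -> inv y = / y.
Proof. by rewrite /inv; case: Req_EM_T. Qed.

Lemma is_rat_poly m (P : vec m -> R) : is_poly P -> is_rat P.
Proof.
move=> HP; exists P, (fun _ => 1); do 2 split=> //; first exact: poly_const.
move=> t /=; destruct (Req_EM_T 1 0); [lra | by rewrite /Rdiv Rinv_1 Rmult_1_r].
Qed.

Lemma is_rat_inv m (P : vec m -> R) : is_poly P -> is_rat (fun t => inv (P t)).
Proof.
move=> HP; exists (fun _ => 1), P; split; first exact: poly_const.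
by split=> // t; rewrite /inv; destruct (Req_EM_T (P t) 0) => //; rewrite /Rdiv Rmult_1_l.
Qed.

(* The product of two "rational functions" is one: the zero convention is
   respected because Q Q' vanishes exactly where Q or Q' does. *)
Lemma is_rat_mul m (F G : vec m -> R) :
  is_rat F -> is_rat G -> is_rat (fun t => F t * G t).
Proof.
move=> [P [Q [HP [HQ HF]]]] [P' [Q' [HP' [HQ' HG]]]].
exists (fun t => P t * P' t), (fun t => Q t * Q' t).
do 2 (split; first exact: poly_mul).
move=> t; rewrite HF HG.
destruct (Req_EM_T (Q t) 0) as [Q0|Q0]; destruct (Req_EM_T (Q' t) 0) as [Q'0|Q'0];
  destruct (Req_EM_T (Q t * Q' t) 0) as [QQ0|QQ0]; simpl; try lra.
all: try by exfalso; apply: QQ0; rewrite ?Q0 ?Q'0; ring.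
all: try by case: (Rmult_integral _ _ QQ0).
field; lra.
Qed.

(* The affine form with zero coefficients; its indicator [1_{0}(0) = 1] is
   the neutral factor that makes R(theta) Q(x) a generator. *)
Lemma affine_form_zero m n theta (x : vec n) :
  affine_form (fun _ : vec m => 0) (fun _ _ => 0) theta x = 0.
Proof.
change (0 + sumL (enum 'I_n) (fun j => 0 * x j) = 0).
rewrite (sumL_ext _ (G := fun _ => 0)) ?sumL_zero => *; lra.
Qed.

Lemma A_rat_poly m n (Rf : vec m -> R) (Q : vec n -> R) :
  is_rat Rf -> is_poly Q -> in_A (fun t x => Rf t * Q x).
Proof.
move=> HR HQ; apply: A_gen.
exists Rf, Q, [:: Factor IZero (fun _ => 0) (fun _ _ => 0)].
do 3 (split=> //); split.
  by move=> c [<-|[]]; split=> [|j]; exact: poly_const.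
move=> t x /=; rewrite /eval_factor /= affine_form_zero.
by destruct (Req_EM_T 0 0); simpl; lra.
Qed.

Lemma A_rat m n (Rf : vec m -> R) : is_rat Rf -> in_A (fun t (x : vec n) => Rf t).
Proof. by move=> H; apply: A_ext (A_rat_poly H (poly_const _ 1)) _ => t x; lra. Qed.

Lemma A_poly m n (Q : vec n -> R) : is_poly Q -> in_A (fun (t : vec m) x => Q x).
Proof.
move=> H; apply: A_ext (A_rat_poly (is_rat_poly (poly_const _ 1)) H) _ => t x; lra.
Qed.

Lemma A_const m n c : in_A (fun (t : vec m) (x : vec n) => c).
Proof. exact: A_rat (is_rat_poly (poly_const _ c)). Qed.

Lemma A_sub m n (f g : vec m -> vec n -> R) :
  in_A f -> in_A g -> in_A (fun t x => f t x - g t x).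
Proof. by move=> Hf Hg; apply: A_ext (A_add Hf (A_scal (-1) Hg)) _ => t x; lra. Qed.

Lemma A_mul_of_gen m n (h : vec m -> vec n -> R) :
  (forall g, is_generator g -> in_A (fun t x => h t x * g t x)) ->
  forall f, in_A f -> in_A (fun t x => h t x * f t x).
Proof.
move=> Hgen f; elim=> {f} [|g /Hgen //|f1 f2 _ H1 _ H2|c f1 _ H1|f1 f2 _ H1 E].
- by apply: A_ext (@A_zero m n) _ => t x; lra.
- by apply: A_ext (A_add H1 H2) _ => t x; lra.
- by apply: A_ext (A_scal c H1) _ => t x; lra.
- by apply: A_ext H1 _ => t x; rewrite E.
Qed.

(* The product of two generators is a generator: concatenate the factors. *)
Lemma generator_mul m n (g h : vec m -> vec n -> R) :
  is_generator g -> is_generator h -> is_generator (fun t x => g t x * h t x).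
Proof.
move=> [R1 [Q1 [cs1 [HR1 [HQ1 [Hn1 [Hc1 Hg]]]]]]].
move=> [R2 [Q2 [cs2 [HR2 [HQ2 [_ [Hc2 Hh]]]]]]].
exists (fun t => R1 t * R2 t), (fun x => Q1 x * Q2 x), (cs1 ++ cs2).
split; first exact: is_rat_mul.
split; first exact: poly_mul.
split; first by move: Hn1; case: (cs1).
split; first by move=> c Hc; case: (List.in_app_or _ _ _ Hc); auto.
by move=> t x; rewrite Hg Hh map_cat prodl_app /prodl; lra.
Qed.

Lemma A_mul m n (f g : vec m -> vec n -> R) :
  in_A f -> in_A g -> in_A (fun t x => f t x * g t x).
Proof.
move=> Hf; apply: A_mul_of_gen => h Hh.
apply: A_ext (A_mul_of_gen (fun g' Hg' => A_gen (generator_mul Hh Hg')) Hf) _.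
by move=> t x; lra.
Qed.

Lemma A_pow m n (f : vec m -> vec n -> R) e : in_A f -> in_A (fun t x => f t x ^ e).
Proof.
move=> Hf; elim: e => [|e IH]; first exact: A_const.
exact: A_mul Hf IH.
Qed.

Definition is_aff m k (F : vec m -> vec k -> R) : Prop :=
  exists P0 P, is_poly P0 /\ (forall j, is_poly (P j)) /\
    forall t x, F t x = affine_form P0 P t x.

Lemma affine_sumL m k (P0 : vec m -> R) P t (x : vec k) :
  affine_form P0 P t x = P0 t + sumL (enum 'I_k) (fun j => P j t * x j).
Proof. by []. Qed.

Lemma aff_ext m k (F G : vec m -> vec k -> R) :
  is_aff F -> (forall t x, F t x = G t x) -> is_aff G.
Proof.
move=> [P0 [P [H0 [HP HF]]]] E; exists P0, P.
by do 2 split=> //; move=> t x; rewrite -E.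
Qed.

Lemma aff_poly m k (c : vec m -> R) : is_poly c -> is_aff (fun t (x : vec k) => c t).
Proof.
move=> Hc; exists c, (fun _ _ => 0); do 2 split=> //; first by move=> j; exact: poly_const.
move=> t x; rewrite affine_sumL (sumL_ext _ (G := fun _ => 0)) ?sumL_zero => *; lra.
Qed.

Lemma aff_add m k (F G : vec m -> vec k -> R) :
  is_aff F -> is_aff G -> is_aff (fun t x => F t x + G t x).
Proof.
move=> [P0 [P [H0 [HP HF]]]] [Q0 [Q [H0' [HQ HG]]]].
exists (fun t => P0 t + Q0 t), (fun j t => P j t + Q j t).
split; first exact: poly_add. split; first by move=> j; exact: poly_add.
move=> t x; rewrite HF HG !affine_sumL.
rewrite (@sumL_ext _ (enum 'I_k) (fun j => (P j t + Q j t) * x j)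
  (fun j => P j t * x j + Q j t * x j)) => [|j]; last ring.
rewrite sumL_add; ring.
Qed.

Lemma aff_mul_poly m k (c : vec m -> R) (F : vec m -> vec k -> R) :
  is_poly c -> is_aff F -> is_aff (fun t x => c t * F t x).
Proof.
move=> Hc [P0 [P [H0 [HP HF]]]].
exists (fun t => c t * P0 t), (fun j t => c t * P j t).
split; first exact: poly_mul. split; first by move=> j; exact: poly_mul.
move=> t x; rewrite HF !affine_sumL.
rewrite (@sumL_ext _ (enum 'I_k) (fun j => c t * P j t * x j)
  (fun j => c t * (P j t * x j))) => [|j]; last ring.
rewrite sumL_scal; ring.
Qed.

Lemma aff_sub m k (F G : vec m -> vec k -> R) :
  is_aff F -> is_aff G -> is_aff (fun t x => F t x - G t x).
Proof.
move=> HF HG; apply: aff_ext (aff_add HF (aff_mul_poly (poly_const _ (-1)) HG)) _.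
by move=> t x; lra.
Qed.

Lemma aff_opp m k (F : vec m -> vec k -> R) : is_aff F -> is_aff (fun t x => - F t x).
Proof. by move=> HF; apply: aff_ext (aff_mul_poly (poly_const _ (-1)) HF) _ => t x; lra. Qed.

Lemma A_ind m k (A : ind_set) (F : vec m -> vec k -> R) :
  is_aff F -> in_A (fun t x => Defs.ind A (F t x)).
Proof.
move=> [P0 [P [H0 [HP HF]]]]; apply: A_gen.
exists (fun _ => 1), (fun _ => 1), [:: Factor A P0 P].
split; first exact: is_rat_poly (poly_const _ 1).
split; first exact: poly_const.
split=> //; split; first by move=> c [<-|[]]; split.
by move=> t x /=; rewrite /eval_factor /= HF; lra.
Qed.

Lemma A_aff m k (F : vec m -> vec k -> R) : is_aff F -> in_A F.
Proof.
move=> [P0 [P [H0 [HP HF]]]].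
have Hsum s : in_A (fun t x => sumL s (fun j => P j t * x j)).
  elim: s => [|j s IH]; first exact: A_const.
  have Hterm := A_mul (@A_rat m k _ (is_rat_poly (HP j))) (@A_poly m k _ (poly_coord j)).
  by apply: A_ext (A_add Hterm IH) _.
by apply: A_ext (A_add (@A_rat m k _ (is_rat_poly H0)) (Hsum (enum 'I_k))) _ => t x; rewrite HF.
Qed.

(* Integration bounds produced by solving c(theta) s + d(theta,x) = 0 for s:
   an affine function of x divided (with the 1/0 = 0 convention) by a
   polynomial of theta. *)
Definition is_end m k (l : vec m -> vec k -> R) : Prop :=
  exists al be, is_aff al /\ is_poly be /\ forall t x, l t x = al t x * inv (be t).

Lemma end_const m k c : is_end (fun (t : vec m) (x : vec k) => c).
Proof.
exists (fun _ _ => c), (fun _ => 1); split; first exact: aff_poly (poly_const _ c).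
split; first exact: poly_const.
by move=> t x; rewrite inv_nz ?Rinv_1; lra.
Qed.

Lemma A_end m k (l : vec m -> vec k -> R) : is_end l -> in_A l.
Proof.
move=> [al [be [Ha [Hb Hl]]]].
apply: A_ext (A_mul (A_aff Ha) (@A_rat m k _ (is_rat_inv Hb))) _ => t x.
by rewrite Hl.
Qed.

Lemma inv_0 : inv 0 = 0.
Proof. by rewrite /inv; destruct (Req_EM_T 0 0). Qed.

Lemma ind_IZero_0 : Defs.ind IZero 0 = 1.
Proof. by rewrite /Defs.ind; destruct (Req_EM_T 0 0). Qed.

Lemma ind_IZero_nz y : y <> 0 -> Defs.ind IZero y = 0.
Proof. by move=> y0; rewrite /Defs.ind; destruct (Req_EM_T y 0). Qed.

Lemma ind_IPos_0 : Defs.ind IPos 0 = 0.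
Proof. rewrite /Defs.ind; destruct (Rlt_dec 0 0); simpl; lra. Qed.

Definition lt_ind (u v : R) : R := if Rlt_dec u v then 1 else 0.

Lemma lt_ind_pos u v : lt_ind u v = Defs.ind IPos (v - u).
Proof.
rewrite /lt_ind /Defs.ind.
by destruct (Rlt_dec u v), (Rlt_dec 0 (v - u)); simpl; lra.
Qed.

(* z / q and z q have the same sign: they differ by the factor q^2 > 0. *)
Lemma ind_pos_div z q : q <> 0 -> Defs.ind IPos (z / q) = Defs.ind IPos (z * q).
Proof.
move=> q0; have q2 : 0 < q * q by nra.
have E : z * q = z / q * (q * q) by field.
rewrite /Defs.ind E; destruct (Rlt_dec 0 (z / q)), (Rlt_dec 0 (z / q * (q * q))); simpl;
  nra.
Qed.

(* Comparing two quotients al/be and al'/be' is a combination of indicators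
   of polynomial-in-theta, affine-in-x expressions, split according to
   whether the denominators vanish. *)
Lemma lt_ind_quot (al be al' be' : R) :
  lt_ind (al * inv be) (al' * inv be') =
    Defs.ind IZero be * (1 - Defs.ind IZero be') * Defs.ind IPos (be' * al')
  + (1 - Defs.ind IZero be) * Defs.ind IZero be' * Defs.ind IPos (be * - al)
  + (1 - Defs.ind IZero be) * (1 - Defs.ind IZero be')
      * Defs.ind IPos (be * be' * (be * al' - be' * al)).
Proof.
rewrite lt_ind_pos.
have [->|b0] := Req_dec be 0; have [->|b'0] := Req_dec be' 0;
  rewrite ?ind_IZero_0 ?(ind_IZero_nz b0) ?(ind_IZero_nz b'0)
          ?inv_0 ?(inv_nz b0) ?(inv_nz b'0).
- by rewrite !Rmult_0_r Rminus_0_r ind_IPos_0; ring.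
- have -> : al' * / be' - al * 0 = al' / be' by field.
  rewrite ind_pos_div // Rmult_comm; ring.
- have -> : al' * 0 - al * / be = - al / be by field.
  rewrite ind_pos_div // Rmult_comm; ring.
- have bb : be * be' <> 0 by apply: Rmult_integral_contrapositive.
  have -> : al' * / be' - al * / be = (be * al' - be' * al) / (be * be') by field.
  rewrite ind_pos_div // Rmult_comm; ring.
Qed.

Lemma A_lt m k (l u : vec m -> vec k -> R) :
  is_end l -> is_end u -> in_A (fun t x => lt_ind (l t x) (u t x)).
Proof.
move=> [al [be [Ha [Hb Hl]]]] [al' [be' [Ha' [Hb' Hu]]]].
have Z (c : vec m -> R) : is_poly c -> in_A (fun t (x : vec k) => Defs.ind IZero (c t)).
  by move=> Hc; apply: A_ind; apply: aff_poly.
have NZ (c : vec m -> R) : is_poly c -> in_A (fun t (x : vec k) => 1 - Defs.ind IZero (c t)).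
  by move=> Hc; apply: A_sub (A_const _ _ 1) (Z c Hc).
have P1 : in_A (fun t x => Defs.ind IPos (be' t * al' t x)).
  by apply: A_ind; apply: aff_mul_poly.
have P2 : in_A (fun t x => Defs.ind IPos (be t * - al t x)).
  by apply: A_ind; apply: aff_mul_poly => //; apply: aff_opp.
have P3 : in_A (fun t x => Defs.ind IPos (be t * be' t * (be t * al' t x - be' t * al t x))).
  by apply: A_ind; apply: aff_mul_poly; [exact: poly_mul|apply: aff_sub; apply: aff_mul_poly].
apply: A_ext (A_add (A_add (A_mul (A_mul (Z _ Hb) (NZ _ Hb')) P1)
  (A_mul (A_mul (NZ _ Hb) (Z _ Hb')) P2)) (A_mul (A_mul (NZ _ Hb) (NZ _ Hb')) P3)) _.
by move=> t x; rewrite Hl Hu lt_ind_quot.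
Qed.

Definition ext_op (mx : bool) : R -> R -> R := if mx then Rmax else Rmin.

Lemma ext_op_split mx (P : R -> R) u v :
  P (ext_op mx u v) =
    lt_ind v u * P (if mx then u else v) + (1 - lt_ind v u) * P (if mx then v else u).
Proof.
rewrite /ext_op /lt_ind /Rmax /Rmin.
case: mx; destruct (Rle_dec u v), (Rlt_dec v u); simpl; lra.
Qed.

Lemma A_fold_ext m k (mx : bool) (Psi : R -> vec m -> vec k -> R) :
  (forall l, is_end l -> in_A (fun t x => Psi (l t x) t x)) ->
  forall ls l0, is_end l0 -> (forall l, List.In l ls -> is_end l) ->
  in_A (fun t x =>
    Psi (List.fold_right (ext_op mx) (l0 t x) (map (fun l => l t x) ls)) t x).
Proof.
move=> HPsi ls; elim: ls Psi HPsi => [|l ls IH] Psi HPsi l0 H0 Hls /=.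
  exact: HPsi.
have El : is_end l by apply: Hls; left.
apply: (IH (fun y t x => Psi (ext_op mx (l t x) y) t x)) => //; last first.
  by move=> l' h; apply: Hls; right.
move=> l' El'.
have Hsel (b : bool) : in_A (fun t x => Psi (if b then l t x else l' t x) t x).
  by case: b; exact: HPsi.
apply: A_ext (A_add (A_mul (A_lt El' El) (Hsel mx))
  (A_mul (A_sub (A_const _ _ 1) (A_lt El' El)) (Hsel (~~ mx)))) _ => t x.
by rewrite (ext_op_split mx (fun y => Psi y t x)); case: (mx).
Qed.

Lemma is_RInt_null_off (h : R -> R) (ps : list R) a b : a <= b ->
  (forall s, a < s < b -> ~ List.In s ps -> h s = 0) -> is_RInt h a b 0.
Proof.
elim: ps a b => [|p ps IH] a b hab Hh.
  have := is_RInt_const a b 0; rewrite scal_zero_r; apply: is_RInt_ext.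
  by move=> s; rewrite Rmin_left ?Rmax_right // => hs; rewrite Hh.
have Hsub c d : a <= c -> c <= d -> d <= b -> (c < p < d -> False) -> is_RInt h c d 0.
  move=> ac cd db np; apply: IH => // s hs hn; apply: Hh; first lra.
  by case=> [E|//]; apply: np; rewrite E.
case: (Rlt_dec a p) => ap; case: (Rlt_dec p b) => pb; try by apply: Hsub; lra.
have := is_RInt_Chasles _ _ _ _ _ _ (Hsub a p _ _ _ _) (Hsub p b _ _ _ _).
by rewrite plus_zero_l; apply; lra.
Qed.

Lemma is_RInt_off_finite (h h' : R -> R) (ps : list R) a b v : a <= b ->
  (forall s, a < s < b -> ~ List.In s ps -> h s = h' s) ->
  is_RInt h' a b v -> is_RInt h a b v.
Proof.
move=> hab E H'.
have Z := is_RInt_null_off (h := fun s => h s - h' s) hab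
  (fun s hs hn => Rminus_diag_eq _ _ (E s hs hn)).
have := is_RInt_plus _ _ _ _ _ _ H' Z; rewrite plus_zero_r.
by apply: is_RInt_ext => s _; rewrite /plus /=; lra.
Qed.

Definition lows (ls : list R) (s : R) : R := prodl (map (fun l => lt_ind l s) ls).
Definition ups (us : list R) (s : R) : R := prodl (map (fun u => lt_ind s u) us).

Definition window (e : nat) (ls us : list R) (s : R) : R :=
  s ^ e * (lows ls s * ups us s).

(* Its integral over [a,b] is [Phi e L U] with L = max(a,ls), U = min(b,us). *)
Definition Phi (e : nat) (L U : R) : R :=
  lt_ind L U * (U ^ e.+1 / INR e.+1 - L ^ e.+1 / INR e.+1).

Lemma lows_max a ls s : a < s -> lows ls s = lt_ind (List.fold_right (ext_op true) a ls) s.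
Proof.
move=> as_; elim: ls => [|l ls IH]; first by rewrite /lows /lt_ind /=; case: Rlt_dec.
rewrite /lows /= -/(lows ls s) IH /lt_ind /ext_op /Rmax.
set M := List.fold_right _ a ls.
by case: (Rle_dec l M) => ?; destruct (Rlt_dec l s), (Rlt_dec M s); simpl; lra.
Qed.

Lemma ups_min b us s : s < b -> ups us s = lt_ind s (List.fold_right (ext_op false) b us).
Proof.
move=> sb; elim: us => [|u us IH]; first by rewrite /ups /lt_ind /=; case: Rlt_dec.
rewrite /ups /= -/(ups us s) IH /lt_ind /ext_op /Rmin.
set M := List.fold_right _ b us.
by case: (Rle_dec u M) => ?; destruct (Rlt_dec s u), (Rlt_dec s M); simpl; lra.
Qed.

Lemma fold_max_ge a ls : a <= List.fold_right (ext_op true) a ls.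
Proof.
rewrite /ext_op; elim: ls => [|l ls IH] /=; first lra.
have := Rmax_r l (List.fold_right Rmax a ls); lra.
Qed.

Lemma fold_min_le b us : List.fold_right (ext_op false) b us <= b.
Proof.
rewrite /ext_op; elim: us => [|u us IH] /=; first lra.
have := Rmin_r u (List.fold_right Rmin b us); lra.
Qed.

Lemma is_RInt_window a b e ls us : a <= b ->
  is_RInt (window e ls us) a b
    (Phi e (List.fold_right (ext_op true) a ls) (List.fold_right (ext_op false) b us)).
Proof.
move=> hab; set L := List.fold_right _ a ls; set U := List.fold_right _ b us.
have aL : a <= L := fold_max_ge a ls.
have Ub : U <= b := fold_min_le b us.
apply: (is_RInt_off_finite (h' := fun s => s ^ e * (lt_ind L s * lt_ind s U)) (ps := nil)) => //.
  by move=> s hs _; rewrite /window (lows_max ls (a := a)) ?(ups_min us (b := b)) //; lra.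
rewrite /Phi /lt_ind; case: (Rlt_dec L U) => LU; last first.
  rewrite Rmult_0_l; apply: (is_RInt_null_off (ps := nil)) => // s _ _.
  by destruct (Rlt_dec L s), (Rlt_dec s U); simpl; try lra; exfalso; lra.
have Hnull c d : a <= c -> c <= d -> d <= b -> (d <= L \/ U <= c) ->
    is_RInt (fun s => s ^ e * (lt_ind L s * lt_ind s U)) c d 0.
  move=> ac cd db out; apply: (is_RInt_null_off (ps := nil)) => // s hs _.
  by rewrite /lt_ind; destruct (Rlt_dec L s), (Rlt_dec s U); simpl; try lra; exfalso; lra.
have Hmid : is_RInt (fun s => s ^ e * (lt_ind L s * lt_ind s U)) L U
    (U ^ e.+1 / INR e.+1 - L ^ e.+1 / INR e.+1).
  apply: is_RInt_ext (is_RInt_pow L U e) => s.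
  rewrite Rmin_left ?Rmax_right; try lra.
  by move=> hs; rewrite /lt_ind; destruct (Rlt_dec L s), (Rlt_dec s U); simpl; lra.
have := is_RInt_Chasles _ _ _ _ _ _
  (is_RInt_Chasles _ _ _ _ _ _ (Hnull a L _ _ _ _) Hmid) (Hnull U b _ _ _ _).
rewrite plus_zero_l plus_zero_r Rmult_1_l; apply; lra.
Qed.

Lemma A_Phi m k a b e (ls us : list (vec m -> vec k -> R)) :
  (forall l, List.In l ls -> is_end l) -> (forall u, List.In u us -> is_end u) ->
  in_A (fun t x => Phi e (List.fold_right (ext_op true) a (map (fun l => l t x) ls))
                         (List.fold_right (ext_op false) b (map (fun u => u t x) us))).
Proof.
move=> Hls Hus.
apply: (A_fold_ext true (Psi := fun L t x =>
  Phi e L (List.fold_right (ext_op false) b (map (fun u => u t x) us)))) => //;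
  last exact: end_const.
move=> l El.
apply: (A_fold_ext false (Psi := fun U t x => Phi e (l t x) U)) => //;
  last exact: end_const.
move=> u Eu; rewrite /Phi.
have Hpow (v : vec m -> vec k -> R) : is_end v ->
    in_A (fun t x => v t x ^ e.+1 / INR e.+1).
  by move=> Ev; apply: A_mul (A_pow e.+1 (A_end Ev)) (A_const _ _ _).
exact: A_mul (A_lt El Eu) (A_sub (Hpow u Eu) (Hpow l El)).
Qed.

Lemma in_map_inv {I J : Type} (F : I -> J) y s :
  List.In y (map F s) -> exists x, F x = y /\ List.In x s.
Proof.
elim: s => [|x s IH] //= [<-|/IH [x' [E H]]]; first by exists x; auto.
by exists x'; auto.
Qed.

Lemma snoc_widen k (x : vec k) t j : snoc x t (widen_ord (leqnSn k) j) = x j.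
Proof.
have -> : widen_ord (leqnSn k) j = lift ord_max j by apply: ord_inj; rewrite lift_max.
by rewrite /snoc liftK.
Qed.

Lemma snoc_max k (x : vec k) t : snoc x t ord_max = t.
Proof. by rewrite /snoc unlift_none. Qed.

Lemma affine_snoc m k (P0 : vec m -> R) (P : 'I_k.+1 -> vec m -> R) th (x : vec k) t :
  affine_form P0 P th (snoc x t) =
  P ord_max th * t + affine_form P0 (fun j => P (widen_ord (leqnSn k) j)) th x.
Proof.
rewrite !affine_sumL enum_ordSr -cats1 sumL_app sumL_map.
rewrite (@sumL_ext _ _
  (fun j => P (widen_ord (leqnSn k) j) th * snoc x t (widen_ord (leqnSn k) j))
  (fun j => P (widen_ord (leqnSn k) j) th * x j)) => [|j]; last by rewrite snoc_widen.
rewrite {2}/sumL /= snoc_max; lra.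
Qed.

(* A polynomial in t with coefficients polynomial in x, as a list of
   (coefficient, exponent) pairs. *)
Definition pexp k (l : list ((vec k -> R) * nat)) (x : vec k) (t : R) : R :=
  sumL l (fun qe => qe.1 x * t ^ qe.2).
Definition all_poly k (l : list ((vec k -> R) * nat)) : Prop :=
  forall qe, List.In qe l -> is_poly qe.1.

Definition mulqe k (qe qe' : (vec k -> R) * nat) : (vec k -> R) * nat :=
  (fun x => qe.1 x * qe'.1 x, (qe.2 + qe'.2)%nat).

Lemma pexp_app k l1 l2 (x : vec k) t : pexp (l1 ++ l2) x t = pexp l1 x t + pexp l2 x t.
Proof. exact: sumL_app. Qed.

Lemma pexp_mul k l1 l2 (x : vec k) t :
  pexp [seq mulqe qe qe' | qe <- l1, qe' <- l2] x t = pexp l1 x t * pexp l2 x t.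
Proof.
elim: l1 => [|qe l1 IH]; first by rewrite /pexp /sumL /=; lra.
rewrite allpairs_cons pexp_app IH {1}/pexp sumL_map.
rewrite (@sumL_ext _ _ _ (fun qe' => qe.1 x * t ^ qe.2 * (qe'.1 x * t ^ qe'.2))).
  by rewrite sumL_scal /pexp /sumL /=; ring.
by move=> qe'; rewrite /mulqe /= pow_add; ring.
Qed.

Lemma all_poly_app k (l1 l2 : list ((vec k -> R) * nat)) :
  all_poly l1 -> all_poly l2 -> all_poly (l1 ++ l2).
Proof. by move=> H1 H2 qe Hq; case: (List.in_app_or _ _ _ Hq); auto. Qed.

Lemma all_poly_mul k (l1 l2 : list ((vec k -> R) * nat)) :
  all_poly l1 -> all_poly l2 -> all_poly [seq mulqe qe qe' | qe <- l1, qe' <- l2].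
Proof.
elim: l1 => [|qe l1 IH] H1 H2; first by move=> q /= [].
rewrite allpairs_cons.
apply: all_poly_app; last by apply: IH => // q hq; apply: H1; right.
move=> q Hq; have [qe' [<- Hqe']] := in_map_inv Hq.
apply: poly_mul; [apply: H1; left | apply: H2] => //.
Qed.

Lemma poly_snoc k (P : vec k.+1 -> R) : is_poly P ->
  exists l, all_poly l /\ forall x t, P (snoc x t) = pexp l x t.
Proof.
elim=> [c|i|p q _ [l1 [H1 E1]] _ [l2 [H2 E2]]|p q _ [l1 [H1 E1]] _ [l2 [H2 E2]]
        |p q _ [l [H E]] Epq].
- exists [:: (fun _ => c, 0%nat)]; split; first by move=> qe [<-|[]]; exact: poly_const.
  by move=> x t; rewrite /pexp /sumL /=; lra.
- case E: (unlift ord_max i) => [j|].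
  + exists [:: (fun x : vec k => x j, 0%nat)]; split.
      by move=> qe [<-|[]]; exact: poly_coord.
    by move=> x t; rewrite /pexp /sumL /= /snoc E; lra.
  + exists [:: (fun _ : vec k => 1, 1%nat)]; split.
      by move=> qe [<-|[]]; exact: poly_const.
    by move=> x t; rewrite /pexp /sumL /= /snoc E; lra.
- exists (l1 ++ l2); split; first exact: all_poly_app.
  by move=> x t; rewrite pexp_app E1 E2.
- exists [seq mulqe qe qe' | qe <- l1, qe' <- l2]; split; first exact: all_poly_mul.
  by move=> x t; rewrite pexp_mul E1 E2.
- by exists l; split=> // x t; rewrite -Epq.
Qed.

Definition nz_set (S : ind_set) : R := if S is IZero then 0 else 1.

Lemma ind_affine_split S c d s : c <> 0 -> s <> - d * inv c ->
  Defs.ind S (c * s + d) =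
    nz_set S * (Defs.ind IPos c * lt_ind (- d * inv c) s
              + Defs.ind IPos (- c) * lt_ind s (- d * inv c)).
Proof.
move=> c0; rewrite inv_nz // => sp; set q := - d * / c in sp *.
have -> : c * s + d = c * (s - q) by rewrite /q; field.
rewrite /nz_set /lt_ind /Defs.ind.
case: (Rdichotomy _ _ c0) => hc; case: (Rdichotomy _ _ sp) => hs; case: S;
  destruct (Req_EM_T (c * (s - q)) 0), (Rle_dec 0 (c * (s - q))),
    (Rlt_dec 0 (c * (s - q))), (Rlt_dec 0 c), (Rlt_dec 0 (- c)),
    (Rlt_dec q s), (Rlt_dec s q); simpl; nra.
Qed.

(* Integrating one factor 1_S(c s + d) against G: for c = 0 it is a constant,
   for c <> 0 it cuts [a,b] at the root -d/c (up to one point). *)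
Lemma is_RInt_factor a b (G : R -> R) S c d V0 V1 V2 : a <= b ->
  is_RInt G a b V0 ->
  is_RInt (fun s => lt_ind (- d * inv c) s * G s) a b V1 ->
  is_RInt (fun s => lt_ind s (- d * inv c) * G s) a b V2 ->
  is_RInt (fun s => Defs.ind S (c * s + d) * G s) a b
    (Defs.ind IZero c * Defs.ind S d * V0
     + nz_set S * (Defs.ind IPos c * V1 + Defs.ind IPos (- c) * V2)).
Proof.
move=> hab H0 H1 H2; have [->|c0] := Req_dec c 0.
  rewrite ind_IZero_0 Ropp_0 ind_IPos_0.
  have -> : 1 * Defs.ind S d * V0 + nz_set S * (0 * V1 + 0 * V2) = Defs.ind S d * V0.
    by ring.
  apply: is_RInt_ext (is_RInt_scal _ _ _ _ _ H0) => s _.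
  by rewrite Rmult_0_l Rplus_0_l.
rewrite ind_IZero_nz // !Rmult_0_l Rplus_0_l.
have H := is_RInt_scal _ _ _ (nz_set S) _ (is_RInt_plus _ _ _ _ _ _
  (is_RInt_scal _ _ _ (Defs.ind IPos c) _ H1)
  (is_RInt_scal _ _ _ (Defs.ind IPos (- c)) _ H2)).
rewrite /scal /plus /= /mult /= in H.
apply: (is_RInt_off_finite (ps := [:: - d * inv c])) H => // s _ hs.
rewrite ind_affine_split //; last by move=> E; apply: hs; left.
by rewrite /Defs.ind; ring.
Qed.

(* A factor 1_S(c(theta) s + d(theta, x)) seen as a function of the
   integration variable s. *)
Record tfactor (m k : nat) := TFactor {
  tf_set : ind_set;
  tf_slope : vec m -> R;
  tf_offset : vec m -> vec k -> R }.

Definition tfactor_ok m k (f : tfactor m k) : Prop :=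
  is_poly (tf_slope f) /\ is_aff (tf_offset f).

Definition eval_tfactor m k (f : tfactor m k) t x s : R :=
  Defs.ind (tf_set f) (tf_slope f t * s + tf_offset f t x).

Definition Pi m k (fs : list (tfactor m k)) t x s : R :=
  prodl (map (fun f => eval_tfactor f t x s) fs).

Definition evl m k (ls : list (vec m -> vec k -> R)) t x : list R :=
  map (fun l => l t x) ls.

Lemma window_low e p ls us s : window e (p :: ls) us s = lt_ind p s * window e ls us s.
Proof. by rewrite /window /lows /=; ring. Qed.

Lemma window_up e p ls us s : window e ls (p :: us) s = lt_ind s p * window e ls us s.
Proof. by rewrite /window /ups /=; ring. Qed.

Section IntegrateFactors.
Variables (m k : nat) (a b : R) (e : nat).
Hypothesis hab : a <= b.

(* Each factor is removed by [is_RInt_factor], at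
   the price of adding its root -d/c as a new lower or upper bound. *)
Lemma A_integral_factors (fs : list (tfactor m k)) :
  (forall f, List.In f fs -> tfactor_ok f) ->
  forall ls us, (forall l, List.In l ls -> is_end l) -> (forall u, List.In u us -> is_end u) ->
  exists V, in_A V /\ forall t x,
    is_RInt (fun s => window e (evl ls t x) (evl us t x) s * Pi fs t x s) a b (V t x).
Proof.
elim: fs => [|[S c d] fs IH] Hfs ls us Hls Hus.
  exists (fun t x => Phi e (List.fold_right (ext_op true) a (evl ls t x))
                           (List.fold_right (ext_op false) b (evl us t x))).
  split; first exact: A_Phi.
  move=> t x; apply: is_RInt_ext (is_RInt_window (e := e) (ls := evl ls t x)
    (us := evl us t x) hab) => s _.
  by rewrite /Pi /prodl /=; ring.
have [/= Hc Hd] : tfactor_ok (TFactor S c d) by apply: Hfs; left.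
have {}Hfs : forall f, List.In f fs -> tfactor_ok f by move=> f h; apply: Hfs; right.
pose p t x := - d t x * inv (c t).
have Ep : is_end p by exists (fun t x => - d t x), c; split; [exact: aff_opp Hd | split].
have [V0 [HV0 I0]] := IH Hfs ls us Hls Hus.
have [V1 [HV1 I1]] := IH Hfs (p :: ls) us (fun l h => ltac:(case: h => [<-|]; auto)) Hus.
have [V2 [HV2 I2]] := IH Hfs ls (p :: us) Hls (fun u h => ltac:(case: h => [<-|]; auto)).
have Hc0 : in_A (fun t (x : vec k) => Defs.ind IZero (c t)).
  by apply: A_ind; apply: aff_poly.
have Hcp : in_A (fun t (x : vec k) => Defs.ind IPos (c t)).
  by apply: A_ind; apply: aff_poly.
have Hcn : in_A (fun t (x : vec k) => Defs.ind IPos (- c t)).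
  by apply: A_ind; apply: aff_opp; apply: aff_poly.
have Hd0 : in_A (fun t x => Defs.ind S (d t x)) by apply: A_ind.
exists (fun t x => Defs.ind IZero (c t) * Defs.ind S (d t x) * V0 t x
  + nz_set S * (Defs.ind IPos (c t) * V1 t x + Defs.ind IPos (- c t) * V2 t x)).
split.
  exact: A_add (A_mul (A_mul Hc0 Hd0) HV0)
    (A_scal _ (A_add (A_mul Hcp HV1) (A_mul Hcn HV2))).
move=> t x; set G := fun s => window e (evl ls t x) (evl us t x) s * Pi fs t x s.
have J1 : is_RInt (fun s => lt_ind (p t x) s * G s) a b (V1 t x).
  by apply: is_RInt_ext (I1 t x) => s _; rewrite /G /= window_low; ring.
have J2 : is_RInt (fun s => lt_ind s (p t x) * G s) a b (V2 t x).
  by apply: is_RInt_ext (I2 t x) => s _; rewrite /G /= window_up; ring.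
apply: is_RInt_ext (is_RInt_factor (S := S) hab (I0 t x) J1 J2) => s _.
by rewrite /G /Pi /eval_tfactor /=; ring.
Qed.

End IntegrateFactors.

Definition restrict_factor m k (cf : factor m k.+1) : tfactor m k :=
  TFactor (f_set cf) (f_P cf ord_max)
    (affine_form (f_P0 cf) (fun j => f_P cf (widen_ord (leqnSn k) j))).

Lemma restrict_factor_ok m k (cf : factor m k.+1) :
  factor_ok cf -> tfactor_ok (restrict_factor cf).
Proof.
move=> [H0 HP]; split=> //=.
by exists (f_P0 cf), (fun j => f_P cf (widen_ord (leqnSn k) j)).
Qed.

Lemma restrict_factors_prod m k (cs : list (factor m k.+1)) t x s :
  List.fold_right Rmult 1 (map (fun c => eval_factor c t (snoc x s)) cs)
  = Pi (map (@restrict_factor m k) cs) t x s.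
Proof.
elim: cs => [|cf cs IH] //=.
by rewrite IH /eval_factor affine_snoc.
Qed.

Section IntegrateGenerators.
Variables (m k : nat) (a b : R).
Hypothesis hab : a <= b.

(* A rational function of theta times a polynomial in (x, s) times factors:
   expand the polynomial in powers of s and integrate monomial by monomial. *)
Lemma A_integral_poly_factors (Rf : vec m -> R) (fs : list (tfactor m k)) l :
  is_rat Rf -> (forall f, List.In f fs -> tfactor_ok f) -> all_poly l ->
  exists W, in_A W /\ forall t x,
    is_RInt (fun s => Rf t * pexp l x s * Pi fs t x s) a b (W t x).
Proof.
move=> HR Hfs; elim: l => [|[q e] l IH] Hl.
  exists (fun _ _ => 0); split; first exact: A_const.
  move=> t x; apply: (is_RInt_null_off (ps := nil)) => // s _ _.
  by rewrite /pexp /sumL /=; ring.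
have Hq : is_poly q by apply: (Hl (q, e)); left.
have [W [HW IW]] := IH (fun qe h => Hl qe (or_intror h)).
have [V [HV IV]] := A_integral_factors e hab Hfs (ls := nil) (us := nil)
  (fun _ h => False_ind _ h) (fun _ h => False_ind _ h).
exists (fun t x => Rf t * q x * V t x + W t x); split.
  exact: A_add (A_mul (A_rat_poly HR Hq) HV) HW.
move=> t x.
have H := is_RInt_plus _ _ _ _ _ _ (is_RInt_scal _ _ _ (Rf t * q x) _ (IV t x)) (IW t x).
apply: is_RInt_ext H => s _.
by rewrite /plus /scal /= /mult /= /pexp /sumL /window /lows /ups /=; ring.
Qed.

Lemma A_integral_generator (g : vec m -> vec k.+1 -> R) : is_generator g ->
  exists V, in_A V /\ forall t x, is_RInt (fun s => g t (snoc x s)) a b (V t x).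
Proof.
move=> [Rf [Q [cs [HR [HQ [_ [Hcs Hg]]]]]]].
have [l [Hl EQ]] := poly_snoc HQ.
have Hfs : forall f, List.In f (map (@restrict_factor m k) cs) -> tfactor_ok f.
  move=> f hf; have [cf [<- hcf]] := in_map_inv hf.
  exact: restrict_factor_ok (Hcs cf hcf).
have [W [HW IW]] := A_integral_poly_factors HR Hfs Hl.
exists W; split=> // t x.
apply: is_RInt_ext (IW t x) => s _.
by rewrite Hg EQ restrict_factors_prod.
Qed.

Lemma A_integral_last (f : vec m -> vec k.+1 -> R) : in_A f ->
  exists V, in_A V /\ forall t x, is_RInt (fun s => f t (snoc x s)) a b (V t x).
Proof.
elim=> {f} [|g /A_integral_generator //|f1 f2 _ [V1 [H1 I1]] _ [V2 [H2 I2]]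
           |c f1 _ [V1 [H1 I1]]|f1 f2 _ [V1 [H1 I1]] E].
- exists (fun _ _ => 0); split; first exact: A_const.
  by move=> t x; apply: (is_RInt_null_off (ps := nil)).
- exists (fun t x => V1 t x + V2 t x); split; first exact: A_add.
  by move=> t x; exact: is_RInt_plus (I1 t x) (I2 t x).
- exists (fun t x => c * V1 t x); split; first exact: A_scal.
  by move=> t x; exact: is_RInt_scal (I1 t x).
- exists V1; split=> // t x.
  by apply: is_RInt_ext (I1 t x) => s _; rewrite E.
Qed.

End IntegrateGenerators.

Theorem proposition4p8 (m k : nat) (a b : R) (f : vec m -> vec k.+1 -> R) :
  (0 < m)%nat -> (a < b)%R -> in_A f ->
  in_A (fun (theta : vec m) (x : vec k) => RInt (fun t => f theta (snoc x t)) a b).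
Proof.
move=> _ hab Hf.
have [V [HV IV]] := A_integral_last (Rlt_le _ _ hab) Hf.
apply: A_ext HV _ => t x.
by rewrite (is_RInt_unique _ _ _ _ (IV t x)).
Qed.
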